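(* Let $R$ be a commutative $k$-algebra with system of coordinates $(x_1,\ldots,x_n)$, $M=x_1R+\cdots+x_nR$, $R/M=k$, and assume $R$ is $M$-adically complete. Let $1\le m\le n$ and let $\hat D_m$, $\hat D_{m,n-m}$, $\hat E_{m,n-m}$ and the right action of $\hat E_{m,n-m}$ on $W_{m,n-m}=k[z_1^{-1},\ldots,z_m^{-1}]((z_{m+1}))\ldots((z_n))$ be as in the context. Then with $W_0=k[z_1^{-1},\ldots,z_n^{-1}]\subset W_{m,n-m}$, $$\hat D_{m,n-m}=\{A\in\hat E_{m,n-m}\;:\;W_0A\subseteq W_0\}.$$
   Context: $k$ is a field of characteristic zero. A system of coordinates of $R$ is a tuple $(x_1,\ldots,x_n)\in R^n$ such that $\mathrm{Der}_k(R)\to R^n$, $\delta\mapsto(\delta(x_i))_i$ is bijective and the common kernel of all derivations is $k$; $\partial_1,\ldots,\partial_n$ are the commuting derivations with $\partial_i(x_j)=\delta_{ij}$ (continuous derivations if $R$ is complete). $\hat D_m$ is the set of formal series $\sum_{\mathbf i\in\mathbb N^m}p_{\mathbf i}\partial_1^{i_1}\cdots\partial_m^{i_m}$, $p_{\mathbf i}\in R$, such that $p_{\mathbf i}\to0$ in the $M$-adic topology as $i_1+\cdots+i_m\to\infty$; it is an associative ring with multiplication given by the Leibniz rule. $\hat D_{m,n-m}=\hat D_m[\partial_{m+1},\ldots,\partial_n]$ and $\hat E_{m,n-m}=\hat D_m((\partial_{m+1}^{-1}))\ldots((\partial_n^{-1}))$ (iterated formal Laurent series in $\partial_j^{-1}$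 with coefficients written on the left, multiplication by the Leibniz rule $\partial^{i}a=\sum_{l\ge0}\binom{i}{l}\partial^l(a)\partial^{i-l}$, $\binom{i}{l}=i(i-1)\cdots(i-l+1)/l!$). The right action of $\hat E_{m,n-m}$ on $W_{m,n-m}$ comes from the identification $\hat E_{m,n-m}/M\hat E_{m,n-m}\simeq W_{m,n-m}$ sending the class of $p\,\partial_1^{i_1}\cdots\partial_n^{i_n}$ ($p\in R$) to $p(0)z_1^{-i_1}\cdots z_n^{-i_n}$, $p(0)$ the image of $p$ in $R/M=k$. *)

From HB Require Import structures.
From mathcomp Require Import all_boot all_order all_algebra.
Set Implicit Arguments. Unset Strict Implicit. Unset Printing Implicit Defensive.
Import Order.TTheory GRing.Theory Num.Theory.
Local Open Scope ring_scope.

Section Defs.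
Variables (k : fieldType) (R : comAlgType k) (n : nat) (x : 'I_n -> R).

Definition is_kder (d : R -> R) : Prop :=
  (forall r s, d (r + s) = d r + d s) /\
  (forall (c : k) r, d (c *: r) = c *: d r) /\
  (forall r s, d (r * s) = r * d s + d r * s).

Definition system_of_coordinates : Prop :=
  (forall d1 d2, is_kder d1 -> is_kder d2 ->
     (forall i, d1 (x i) = d2 (x i)) -> forall r, d1 r = d2 r) /\
  (forall v : 'I_n -> R, exists d, is_kder d /\ forall i, d (x i) = v i) /\
  (forall r, (forall d, is_kder d -> d r = 0) <-> exists c : k, r = c%:A).

Fixpoint memMpow (j : nat) (r : R) : Prop :=
  match j with
  | 0 => True
  | j'.+1 => exists f : 'I_n -> R, (forall i, memMpow j' (f i)) /\
                                    r = \sum_(i < n) x i * f i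
  end.

Definition memM (r : R) : Prop := memMpow 1 r.

Definition quotient_is_k : Prop :=
  (forall r, exists c : k, memM (r - c%:A)) /\
  (forall c : k, memM (c%:A) -> c = 0).

Definition Madic_complete : Prop :=
  (forall r, (forall j, memMpow j r) -> r = 0) /\
  (forall u : nat -> R,
     (forall j, exists N, forall p q, (N <= p)%N -> (N <= q)%N -> memMpow j (u p - u q)) ->
     exists l, forall j, exists N, forall p, (N <= p)%N -> memMpow j (u p - l)).

(* exponents of monomials d_1^{g_1} ... d_n^{g_n} *)
Definition expo := 'I_n -> int.

(* Elements of \hat E_{m,n-m} = \hat D_m((d_{m+1}^-1))...((d_n^-1)), given by
   their coefficient functions (coefficients written on the left). *)
Definition in_Ehat (m : nat) (A : expo -> R) : Prop :=
  (forall g : expo, (exists i : 'I_n, (i < m)%N /\ g i < 0) -> A g = 0) /\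
  (* iterated Laurent series: for each fixed outer exponents, the exponent
     of d_k is bounded above *)
  (forall (kk : 'I_n) (g0 : expo), (m <= kk)%N ->
     exists B : int, forall g : expo,
       (forall i : 'I_n, (kk < i)%N -> g i = g0 i) -> A g != 0 -> g kk <= B) /\
  (* each \hat D_m-coefficient has coefficients tending to 0 M-adically *)
  (forall (g0 : expo) (j : nat), exists N : int, forall g : expo,
     (forall i : 'I_n, (m <= i)%N -> g i = g0 i) ->
     N <= \sum_(i < n | (i < m)%N) g i -> memMpow j (A g)).

Definition in_Dhat (m : nat) (A : expo -> R) : Prop :=
  in_Ehat m A /\
  exists B : int, forall g : expo, A g != 0 ->
    forall i : 'I_n, (m <= i)%N -> 0 <= g i <= B.

Definition dpow (d : 'I_n -> R -> R) (l : 'I_n -> nat) (r : R) : R :=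
  foldr (fun i s => iter (l i) (d i) s) r (enum 'I_n).

(* Coefficient of z^{-g} in z^{-a} . A (right action of \hat E_{m,n-m} on
   W_{m,n-m}), for a in N^n: the class of d^a A modulo M \hat E, where
   d^a (p d^b) = sum_{l <= a} binom(a,l) d^l(p) d^{a-l+b}. *)
Definition mono_act (d : 'I_n -> R -> R) (ev : R -> k) (a : 'I_n -> nat)
    (A : expo -> R) (g : expo) : k :=
  let bnd := (\sum_(i < n) a i)%N in
  \sum_(l : {ffun 'I_n -> 'I_bnd.+1})
     (\prod_(i < n) ('C(a i, l i))%:R) *
     ev (dpow d (fun i => nat_of_ord (l i))
            (A (fun i => g i - (a i)%:Z + (nat_of_ord (l i))%:Z))).

(* An element of W_0 = k[z_1^-1,...,z_n^-1], written as a finite list of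
   terms (a, c) standing for c z^{-a}; its image under A. *)
Definition W0_act (d : 'I_n -> R -> R) (ev : R -> k)
    (w : seq (('I_n -> nat) * k)) (A : expo -> R) (g : expo) : k :=
  \sum_(t <- w) t.2 * mono_act d ev t.1 A g.

(* an element of W_{m,n-m} (given by coefficients of z^{-g}) lies in W_0 *)
Definition in_W0 (f : expo -> k) : Prop :=
  exists B : int, forall g : expo, f g != 0 -> forall i, 0 <= g i <= B.

End Defs.

From HB Require Import structures.
From mathcomp Require Import all_boot all_order all_algebra.
From mathcomp Require Import zify ring lra.
From Stdlib Require Import FunctionalExtensionality.
Import Order.TTheory GRing.Theory Num.Theory.
Local Open Scope ring_scope.
Set Implicit Arguments. Unset Strict Implicit. Unset Printing Implicit Defensive.

(* The coefficient of z^-g in z^-a . A is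
     sum_{l <= a} binom(a, l) ev (d^l (A (g - a + l))),
   built from the "Taylor coefficients" ev (d^l r) of the coefficients r of A.

   (=>) If A is in \hat D_{m,n-m}, its coefficients outside M^j have all
   their exponents in a fixed box (finitely many outer exponents, and the
   M-adic convergence in d_1..d_m made uniform over them).  A nonzero term
   above forces A (g - a + l) outside M^(|a|+1), so g ranges in a box.

   (<=) If W_0 A is contained in W_0, an induction on |l| shows that every
   Taylor coefficient of a coefficient of A with a negative outer exponent
   vanishes.  In characteristic 0, the Euler operator sum_i x_i d_i shows
   that an element with all Taylor coefficients zero lies in every M^j,
   hence is 0.  So outer exponents are nonnegative on the support of A, and
   the iterated Laurent condition then bounds them from above. *)

Section Filtration.
Variables (k : fieldType) (R : comAlgType k) (n : nat) (x : 'I_n -> R).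

Lemma memMpow0 j : memMpow x j 0.
Proof.
elim: j => [|j IH] //=; exists (fun _ => 0); split => //.
by rewrite big1 // => i _; rewrite mulr0.
Qed.

Lemma memMpowD j r s : memMpow x j r -> memMpow x j s -> memMpow x j (r + s).
Proof.
elim: j r s => [|j IH] r s //= [f [Hf ->]] [g [Hg ->]].
exists (fun i => f i + g i); split; first by move=> i; apply: IH.
by rewrite -big_split /=; apply: eq_bigr => i _; rewrite mulrDr.
Qed.

Lemma memMpowMl j r s : memMpow x j r -> memMpow x j (s * r).
Proof.
elim: j r s => [|j IH] r s //= [f [Hf ->]].
exists (fun i => s * f i); split; first by move=> i; apply: IH.
by rewrite mulr_sumr; apply: eq_bigr => i _; rewrite mulrCA.
Qed.

Lemma memMpowB j r s : memMpow x j r -> memMpow x j s -> memMpow x j (r - s).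
Proof. by move=> Hr Hs; rewrite -mulN1r; apply/memMpowD/memMpowMl. Qed.

Lemma memMpowZ j (c : k) r : memMpow x j r -> memMpow x j (c *: r).
Proof. by rewrite -mulr_algl; apply: memMpowMl. Qed.

Lemma memMpow_sum j (I : Type) (s : seq I) (F : I -> R) :
  (forall i, memMpow x j (F i)) -> memMpow x j (\sum_(i <- s) F i).
Proof.
move=> HF; elim: s => [|a s IH]; first by rewrite big_nil; apply: memMpow0.
by rewrite big_cons; apply: memMpowD.
Qed.

Lemma memMpow_coord j i r : memMpow x j r -> memMpow x j.+1 (x i * r).
Proof.
move=> Hr /=; exists (fun l => if l == i then r else 0); split.
  by move=> l; case: eqP => _ //; apply: memMpow0.
rewrite (bigD1 i) //= eqxx big1 ?addr0 // => l /negbTE ->; by rewrite mulr0.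
Qed.

Lemma memMpow_le j j' r : (j <= j')%N -> memMpow x j' r -> memMpow x j r.
Proof.
move=> /subnK <-; elim: (j' - j)%N => [|t IH] //= Hr; apply: IH.
elim: (t + j)%N r Hr => [|i IHi] r //= [f [Hf ->]].
by exists f; split => // l; apply: IHi.
Qed.
End Filtration.

Section Derivations.
Variables (k : fieldType) (R : comAlgType k).
Implicit Type dd : R -> R.

Lemma kder0 dd : is_kder dd -> dd 0 = 0.
Proof. by case=> Hadd _; apply: (@addrI _ (dd 0)); rewrite -Hadd !addr0. Qed.

Lemma kder_sum dd (I : Type) (s : seq I) (F : I -> R) :
  is_kder dd -> dd (\sum_(i <- s) F i) = \sum_(i <- s) dd (F i).
Proof.
move=> Hd; elim: s => [|a s IH]; first by rewrite !big_nil kder0.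
by rewrite !big_cons (proj1 Hd) IH.
Qed.

Lemma kder_nat dd c : is_kder dd -> dd c%:R = 0.
Proof.
move=> Hd; have d1 : dd 1 = 0.
  apply: (@addrI _ (dd 1)); rewrite addr0.
  by have := (proj2 (proj2 Hd)) 1 1; rewrite mul1r mulr1 mul1r.
elim: c => [|c IH]; first by rewrite kder0.
by rewrite -addn1 natrD (proj1 Hd) d1 IH addr0.
Qed.

Lemma kder_commutator dd1 dd2 : is_kder dd1 -> is_kder dd2 ->
  is_kder (fun r => dd1 (dd2 r) - dd2 (dd1 r)).
Proof.
move=> [A1 [Z1 M1]] [A2 [Z2 M2]]; split; [|split].
- by move=> r s; rewrite A2 A1 A1 A2; ring.
- by move=> c r; rewrite Z2 Z1 Z1 Z2 scalerBr.
- by move=> r s; rewrite M2 M1 A1 A2 !M1 !M2; ring.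
Qed.

Variables (n : nat) (x : 'I_n -> R).

Lemma memMpow_kder dd j r :
  is_kder dd -> memMpow x j.+1 r -> memMpow x j (dd r).
Proof.
move=> Hd; elim: j r => [|j IH] r; first by [].
move=> [f [Hf ->]].
rewrite kder_sum //; apply: memMpow_sum => i.
rewrite (proj2 (proj2 Hd)); apply: memMpowD; last exact: memMpowMl.
by apply: memMpow_coord; apply: IH.
Qed.

End Derivations.

Section Coordinates.
Variables (k : fieldType) (R : comAlgType k) (n : nat) (x : 'I_n -> R)
  (d : 'I_n -> R -> R) (ev : R -> k).
Hypotheses (hd : forall i, is_kder (d i))
  (hdx : forall i j, d i (x j) = (i == j)%:R)
  (hev : forall r, memM x (r - (ev r)%:A)).

Lemma ev_memM r : quotient_is_k x -> memM x r -> ev r = 0.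
Proof.
move=> [_ hk] Hr; apply/eqP; rewrite -subr_eq0; apply/eqP/hk.
have -> : (ev r - 0)%:A = r - (r - (ev r)%:A) by rewrite subr0 subKr.
exact: (memMpowB Hr (hev r)).
Qed.

Lemma memM_ev r : ev r = 0 -> memM x r.
Proof. by move=> H; have := hev r; rewrite H scale0r subr0. Qed.

Lemma dpow0 r : dpow d (fun _ => 0%N) r = r.
Proof. by rewrite /dpow; elim: (enum 'I_n) => //= a s ->. Qed.

Lemma memMpow_dpow l j r :
  memMpow x (j + \sum_(i < n) l i) r -> memMpow x j (dpow d l r).
Proof.
rewrite /dpow -big_enum /=.
elim: (enum 'I_n) j => [|a s IH] j; first by rewrite big_nil addn0.
rewrite big_cons /= addnCA => H; elim: (l a) j H => [|c IHc] j H /=.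
  exact: IH.
by apply: (memMpow_kder (hd a)); apply: IHc; move: H; rewrite !addSn !addnS.
Qed.

Definition euler r := \sum_(i < n) x i * d i r.

Lemma euler_memMpow j r : memMpow x j r -> memMpow x j.+1 (euler r - r *+ j).
Proof.
elim: j r => [|j IH] r.
  by move=> _; rewrite mulr0n subr0 /=; exists (fun i => d i r).
move=> [f [Hf ->]]; exists (fun i => euler (f i) - f i *+ j); split.
  by move=> i; apply: IH; apply: Hf.
have d_comb l : d l (\sum_(i < n) x i * f i) =
    \sum_(i < n) x i * d l (f i) + f l.
  rewrite kder_sum //; under eq_bigr do rewrite (proj2 (proj2 (hd _))) hdx.
  rewrite big_split /=; congr (_ + _).
  rewrite (bigD1 l) //= eqxx mul1r big1 ?addr0 // => i.
  by rewrite eq_sym => /negbTE ->; rewrite mul0r.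
rewrite /euler; under eq_bigr do rewrite d_comb mulrDr.
rewrite big_split /=.
under [in RHS]eq_bigr do rewrite mulrBr mulr_sumr mulrnAr.
rewrite sumrB sumrMnl.
have -> : \sum_(i < n) x i * (\sum_(l < n) x l * d i (f l)) =
          \sum_(i < n) \sum_(l < n) x i * (x l * d l (f i)).
  under eq_bigr do rewrite mulr_sumr.
  rewrite exchange_big /=; apply: eq_bigr => i _; apply: eq_bigr => l _.
  by rewrite mulrCA.
by rewrite mulrS; ring.
Qed.

Section Commuting.
Hypothesis hsc : system_of_coordinates x.

(* The coordinate derivations commute: their commutator is a derivation
   vanishing on every x_j, hence zero by uniqueness of derivations. *)
Lemma dcomm i j r : d i (d j r) = d j (d i r).
Proof.
case: hsc => huniq _; apply/eqP; rewrite -subr_eq0; apply/eqP.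
apply: (huniq _ (fun _ => 0) (kder_commutator (hd i) (hd j))).
  by split; [|split] => *; rewrite ?addr0 ?scaler0 ?mulr0 ?mul0r ?addr0.
by move=> l; rewrite !hdx !kder_nat // subrr.
Qed.

Lemma iter_dcomm i j c r : d i (iter c (d j) r) = iter c (d j) (d i r).
Proof. by elim: c => //= c <-; rewrite dcomm. Qed.

Lemma dpow_dcomm i l r : d i (dpow d l r) = dpow d l (d i r).
Proof. by rewrite /dpow; elim: (enum 'I_n) => //= a s <-; rewrite iter_dcomm. Qed.

Lemma dpow_incr i l r :
  dpow d (fun j => (l j + (j == i))%N) r = d i (dpow d l r).
Proof.
rewrite /dpow; have -> : forall s : seq 'I_n,
    foldr (fun j t => iter (l j + (j == i)) (d j) t) r s =
    iter (count_mem i s) (d i) (foldr (fun j t => iter (l j) (d j) t) r s).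
  elim=> [|a s IH] //=; rewrite IH; case: (eqVneq a i) => [->|ne] /=.
    by rewrite add0n addn1 iterS -!iterD addnC.
  by elim: (l a) => //= c ->; rewrite iter_dcomm.
by rewrite count_uniq_mem ?enum_uniq // mem_enum.
Qed.

Lemma taylor_vanish_memMpow j r : [pchar k] =i pred0 ->
  (forall l, ev (dpow d l r) = 0) -> memMpow x j.+1 r.
Proof.
move=> hch; elim: j r => [|j IH] r Hr.
  by apply: memM_ev; have := Hr (fun _ => 0%N); rewrite dpow0.
have Hr1 := IH _ Hr.
have Hdr i : memMpow x j.+1 (d i r).
  by apply: IH => l; rewrite -dpow_dcomm -dpow_incr.
have HE : memMpow x j.+2 (euler r) by apply: memMpow_sum => i; apply: memMpow_coord.
have Hm : memMpow x j.+2 (r *+ j.+1).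
  by have := memMpowB HE (euler_memMpow Hr1); rewrite opprB addrC subrK.
have nz : (j.+1%:R : k) != 0 by move/pcharf0P: hch => ->.
have -> : r = (j.+1%:R : k)^-1 *: (r *+ j.+1).
  by rewrite -scaler_nat scalerA mulVf // scale1r.
exact: memMpowZ.
Qed.

Lemma taylor_vanish_eq0 r : [pchar k] =i pred0 -> Madic_complete x ->
  (forall l, ev (dpow d l r) = 0) -> r = 0.
Proof.
move=> hch [hsep _] Hr; apply: hsep => -[|j] //.
exact: taylor_vanish_memMpow.
Qed.

End Commuting.

End Coordinates.

Lemma finite_uniform_bound (T : finType) (P : T -> int -> Prop) :
  (forall h N N', P h N -> N <= N' -> P h N') ->
  (forall h, exists N, P h N) -> exists N, forall h, P h N.
Proof.
move=> Pmono Pex; suff [N HN] : exists N, forall h, h \in enum T -> P h N.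
  by exists N => h; apply: HN; rewrite mem_enum.
elim: (enum T) => [|a s [N IH]]; first by exists 0.
have [Na Ha] := Pex a; exists (Num.max Na N) => h; rewrite in_cons.
case/orP => [/eqP ->|hs]; first by apply: Pmono Ha _; rewrite le_max lexx.
by apply: Pmono (IH _ hs) _; rewrite le_max lexx orbT.
Qed.

Lemma box_uniform_bound n (S : pred 'I_n) (B : int) (P : expo n -> int -> Prop) :
  (forall g N N', P g N -> N <= N' -> P g N') ->
  (forall g g' N, {in S, g =1 g'} -> P g N -> P g' N) ->
  (forall g, exists N, P g N) ->
  exists N, forall g, {in S, forall i, 0 <= g i <= B} -> P g N.
Proof.
move=> Pmono Pext Pex; pose Bn := `|B|%N.
pose of_box (h : {ffun 'I_n -> 'I_Bn.+1}) : expo n := fun i => (h i : nat)%:Z.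
have [N HN] := @finite_uniform_bound _ (fun h => P (of_box h))
  (fun h => Pmono (of_box h)) (fun h => Pex (of_box h)).
exists N => g gB; pose h := [ffun i => inord `|g i|%N] : {ffun 'I_n -> 'I_Bn.+1}.
apply: Pext (HN h) => i iS; have /andP[g0 gle] := gB i iS.
rewrite /of_box ffunE inordK ?gez0_abs // ltnS; lia.
Qed.

Lemma leq_sum_ord n (l : 'I_n -> nat) i : (l i <= \sum_(j < n) l j)%N.
Proof. by rewrite (bigD1 i) //= leq_addr. Qed.

Lemma ltn_sum_ord n (l l' : 'I_n -> nat) :
  (forall i, (l' i <= l i)%N) -> (exists i, (l' i < l i)%N) ->
  (\sum_(i < n) l' i < \sum_(i < n) l i)%N.
Proof.
move=> hle [i hi]; rewrite (bigD1 i) //= [X in (_ < X)%N](bigD1 i) //=.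
by rewrite -addSn leq_add // leq_sum.
Qed.

Lemma sum_neq0_witness (V : nmodType) (T : finType) (F : T -> V) :
  \sum_(t : T) F t != 0 -> exists t, F t != 0.
Proof.
move=> hne; apply/existsP; apply: contraNT hne => /existsPn Fz.
by rewrite big1 // => t _; move: (Fz t); rewrite negbK => /eqP.
Qed.

Section MonomialAction.
Variables (k : fieldType) (R : comAlgType k) (n : nat)
  (d : 'I_n -> R -> R) (ev : R -> k) (A : expo n -> R).

(* The coefficient of z^-g in z^-a . A involves the coefficient of A of
   exponent g - a + l through its Taylor coefficient ev (d^l _), l <= a. *)
Notation shift g a l := (fun i : 'I_n => g i - (a i)%:Z + (l i)%:Z).

Lemma mono_act_support (a : 'I_n -> nat) (g : expo n) :
  mono_act d ev a A g != 0 ->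
  exists2 l : 'I_n -> nat, forall i, (l i <= a i)%N &
    ev (dpow d l (A (shift g a l))) != 0.
Proof.
move=> /sum_neq0_witness [lf hlf]; exists (fun i => nat_of_ord (lf i)).
  move=> i; rewrite leqNgt; apply: contra hlf => hlt.
  by rewrite (bigD1 i) //= bin_small // !mul0r.
by apply: contraNneq hlf => ->; rewrite mulr0.
Qed.

Lemma mono_act_leading (a : 'I_n -> nat) (g : expo n) :
  (forall l : 'I_n -> nat, (forall i, (l i <= a i)%N) -> (exists i, (l i < a i)%N) ->
     ev (dpow d l (A (shift g a l))) = 0) ->
  mono_act d ev a A g = ev (dpow d a (A g)).
Proof.
move=> Hlow; rewrite /mono_act; set bnd := (\sum_(i < n) a i)%N.
pose la : {ffun 'I_n -> 'I_bnd.+1} := [ffun i => inord (a i)].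
have laE i : (la i : nat) = a i by rewrite ffunE inordK // ltnS leq_sum_ord.
rewrite (bigD1 la) //= [X in _ + X]big1; last first.
  move=> lf lf_ne; case: (boolP [forall i, (lf i <= a i)%N]); last first.
    by case/forallPn => i; rewrite -ltnNge => hlt; rewrite (bigD1 i) //= bin_small // !mul0r.
  move/forallP=> hle; rewrite Hlow ?mulr0 //.
  apply/existsP; apply: contraNT lf_ne; rewrite negb_exists => /forallP hge.
  apply/eqP/ffunP => i; apply/val_inj; rewrite /= laE; apply/eqP.
  by rewrite eqn_leq hle leqNgt hge.
rewrite big1 ?mul1r ?addr0; last by move=> i _; rewrite laE binn.
have -> : (fun i => nat_of_ord (la i)) = a by apply: functional_extensionality.
by congr (ev (dpow _ _ (A _))); apply: functional_extensionality => i; rewrite laE subrK.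
Qed.

End MonomialAction.

Lemma in_W0_comb (k : fieldType) n (c : k) (f f' : expo n -> k) :
  in_W0 f -> in_W0 f' -> in_W0 (fun g => c * f g + f' g).
Proof.
move=> [B HB] [B' HB']; exists (Num.max B B') => g hne i.
have hB : B <= Num.max B B' by rewrite le_max lexx.
have hB' : B' <= Num.max B B' by rewrite le_max lexx orbT.
case: (eqVneq (f g) 0) => [f0|fne]; last first.
  by have /andP[-> /le_trans ->] := HB g fne i.
rewrite f0 mulr0 add0r in hne.
by have /andP[-> /le_trans ->] := HB' g hne i.
Qed.

Section Forward.
Variables (k : fieldType) (R : comAlgType k) (n : nat) (x : 'I_n -> R)
  (d : 'I_n -> R -> R) (ev : R -> k) (m : nat) (A : expo n -> R).
Hypothesis hD : in_Dhat x m A.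

Lemma Dhat_box j : exists N, forall b : expo n, ~ memMpow x j (A b) ->
  forall i, 0 <= b i <= N.
Proof.
case: hD => -[hpos [_ hconv]] [B HB].
have [N HN] := @box_uniform_bound n [pred i : 'I_n | (m <= i)%N] B
  (fun g0 N => forall g, (forall i : 'I_n, (m <= i)%N -> g i = g0 i) ->
     N <= \sum_(i < n | (i < m)%N) g i -> memMpow x j (A g))
  (fun g0 N N' H le g eg hs => H g eg (le_trans le hs))
  (fun g0 g0' N e H g eg => H g (fun i iS => etrans (eg i iS) (esym (e i iS))))
  (fun g0 => hconv g0 j).
exists (Num.max N B) => b notM.
have Ab0 : A b != 0 by apply/eqP => Ab0; apply: notM; rewrite Ab0; apply: memMpow0.
have hsum : \sum_(i < n | (i < m)%N) b i < N.
  rewrite ltNge; apply/negP => hle; apply: notM; apply: (HN b) => //.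
  by move=> i iS; apply: HB.
have hin (i : 'I_n) : (i < m)%N -> 0 <= b i.
  move=> hi; rewrite leNgt; apply/negP => hbi; move/eqP: Ab0; apply.
  by apply: hpos; exists i.
have hNm : N <= Num.max N B by rewrite le_max lexx.
have hBm : B <= Num.max N B by rewrite le_max lexx orbT.
move=> i; case: (ltnP i m) => him; last first.
  by have /andP[-> /le_trans ->] := HB b Ab0 i him.
have hbi : b i <= \sum_(i < n | (i < m)%N) b i.
  rewrite (bigD1 i) //= lerDl; apply: sumr_ge0 => l /andP[hl _]; exact: hin.
rewrite hin //=; lra.
Qed.

Hypotheses (hd : forall i, is_kder (d i)) (hq : quotient_is_k x)
  (hev : forall r, memM x (r - (ev r)%:A)).

Lemma Dhat_mono_W0 (a : 'I_n -> nat) : in_W0 (mono_act d ev a A).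
Proof.
have [N HN] := Dhat_box (\sum_(i < n) a i).+1.
exists (N + (\sum_(i < n) a i)%N%:Z) => g /mono_act_support [l hla hl] i.
set b := fun t => g t - (a t)%:Z + (l t)%:Z in hl.
have notM : ~ memMpow x (\sum_(i < n) a i).+1 (A b).
  move=> hM; move/eqP: hl; apply; apply: (ev_memM hev hq).
  apply: (memMpow_dpow hd); apply: memMpow_le hM.
  by rewrite add1n ltnS; apply: leq_sum => t _.
have /andP[b0 bN] := HN b notM i.
have := hla i; have := leq_sum_ord a i.
rewrite /b in b0 bN; move: b0 bN; lia.
Qed.

Lemma Dhat_W0 w : in_W0 (W0_act d ev w A).
Proof.
elim: w => [|t w IH]; first by exists 0 => g; rewrite /W0_act big_nil eqxx.
have -> : W0_act d ev (t :: w) A =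
    (fun g => t.2 * mono_act d ev t.1 A g + W0_act d ev w A g).
  by apply: functional_extensionality => g; rewrite /W0_act big_cons.
exact: in_W0_comb (Dhat_mono_W0 t.1) IH.
Qed.

End Forward.

Section Backward.
Variables (k : fieldType) (R : comAlgType k) (n : nat) (x : 'I_n -> R)
  (d : 'I_n -> R -> R) (ev : R -> k) (m : nat) (A : expo n -> R).
Hypothesis hE : in_Ehat x m A.

(* An element of \hat E_{m,n-m} whose outer exponents (those of
   d_{m+1}, ..., d_n) are nonnegative on its support has them bounded:
   going down from d_n, the Laurent condition bounds each outer exponent
   uniformly once the outer exponents after it range in a finite box. *)
Lemma Ehat_outer_bounded :
  (forall g, A g != 0 -> forall i : 'I_n, (m <= i)%N -> 0 <= g i) ->
  exists B, forall g, A g != 0 -> forall i : 'I_n, (m <= i)%N -> g i <= B.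
Proof.
move=> hnneg.
suff step t : (t <= n - m)%N -> exists B, forall g, A g != 0 ->
    forall i : 'I_n, (n - t <= i)%N -> g i <= B.
  have [B HB] := step (n - m)%N (leqnn _).
  by exists B => g hA i hi; apply: (HB g hA i); have := ltn_ord i; lia.
elim: t => [|t IH] ht.
  by exists 0 => g _ i; rewrite subn0 => hi; have := ltn_ord i; lia.
have [B HB] := IH (ltnW ht).
have kk_lt : (n - t.+1 < n)%N by lia.
pose kk := Ordinal kk_lt; have m_kk : (m <= kk)%N by rewrite /=; lia.
have [N HN] := @box_uniform_bound n [pred i : 'I_n | (kk < i)%N] B
  (fun g0 N => forall g, (forall i : 'I_n, (kk < i)%N -> g i = g0 i) ->
     A g != 0 -> g kk <= N)
  (fun g0 N N' H le g eg hA => le_trans (H g eg hA) le)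
  (fun g0 g0' N e H g eg => H g (fun i iS => etrans (eg i iS) (esym (e i iS))))
  (fun g0 => (proj1 (proj2 hE)) kk g0 m_kk).
exists (Num.max B N) => g hA i hi.
have [kk_i|] := ltnP kk i.
  by rewrite le_max HB //=; move: kk_i => /=; lia.
rewrite leq_eqVlt => /orP[/eqP i_kk|/=]; last by lia.
have -> : i = kk by apply/val_inj.
rewrite le_max (HN g) ?orbT // => j; rewrite inE /= => kk_j.
by rewrite hnneg ?HB //=; move: kk_j m_kk => /=; lia.
Qed.

Hypothesis hW : forall w : seq (('I_n -> nat) * k), in_W0 (W0_act d ev w A).

(* If W_0 A is contained in W_0, every Taylor coefficient ev (d^l (A b)) with
   a negative outer exponent b_i0 vanishes: by induction on |l|, it is the
   coefficient of z^-b in z^-l . A, which must vanish since b_i0 < 0. *)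
Lemma W0_taylor_negative (l : 'I_n -> nat) (b : expo n) (i0 : 'I_n) :
  (m <= i0)%N -> b i0 < 0 -> ev (dpow d l (A b)) = 0.
Proof.
have [N] := ubnP (\sum_(i < n) l i); elim: N l b => // N IH l b.
rewrite ltnS => l_N m_i0 b_neg; apply/eqP; apply: contraT => hne.
have [B HB] := hW [:: (l, 1)].
have lead : W0_act d ev [:: (l, 1)] A b = ev (dpow d l (A b)).
  rewrite /W0_act big_seq1 /= mul1r; apply: mono_act_leading => l' hle hlt.
  apply: IH => //; first exact: leq_trans (ltn_sum_ord hle hlt) l_N.
  by have := hle i0; move: b_neg; lia.
have hWb : W0_act d ev [:: (l, 1)] A b != 0 by rewrite lead.
have /andP[b0 _] := HB b hWb i0.
by move: b_neg; rewrite ltNge b0.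
Qed.

Lemma W0_outer_nonneg :
  [pchar k] =i pred0 -> system_of_coordinates x -> Madic_complete x ->
  (forall i, is_kder (d i)) -> (forall i j, d i (x j) = (i == j)%:R) ->
  (forall r, memM x (r - (ev r)%:A)) ->
  forall g, A g != 0 -> forall i : 'I_n, (m <= i)%N -> 0 <= g i.
Proof.
move=> hch hsc hc hd hdx hev g hA i hi; rewrite leNgt; apply/negP => hg.
move/eqP: hA; apply; apply: (taylor_vanish_eq0 hd hdx hev hsc hch hc) => l.
exact: W0_taylor_negative hi hg.
Qed.

End Backward.

Theorem proposition2 (k : fieldType) (R : comAlgType k) (n : nat)
    (x : 'I_n -> R) (m : nat)
    (d : 'I_n -> R -> R) (ev : R -> k) :
  [pchar k] =i pred0 ->
  system_of_coordinates x ->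
  quotient_is_k x ->
  Madic_complete x ->
  (1 <= m)%N -> (m <= n)%N ->
  (forall i, is_kder (d i)) ->
  (forall i j, d i (x j) = (i == j)%:R) ->
  (forall r, memM x (r - (ev r)%:A)) ->
  forall A : expo n -> R, in_Ehat x m A ->
    (in_Dhat x m A <->
     forall w : seq (('I_n -> nat) * k), in_W0 (W0_act d ev w A)).
Proof.
move=> hch hsc hq hc _ _ hd hdx hev A hE; split => [hD w | hW].
  exact: Dhat_W0 hD hd hq hev w.
have hnneg := W0_outer_nonneg (m := m) hW hch hsc hc hd hdx hev.
have [B HB] := Ehat_outer_bounded hE hnneg.
split => //; exists B => g hA i hi.
by rewrite hnneg ?HB.
Qed.
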